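(* Let $G$ be a finite group and $p$ a prime. Then \[ \chi(\mathcal F^*_G)=|G|^{-1}\sum_{x\in G}\chi(\mathcal S^*_{C_G(x)}). \]
   Context: $\mathcal F^*_G$ is the category whose objects are the nonidentity $p$-subgroups of $G$, with $\mathcal F^*_G(H,K)=C_G(H)\backslash N_G(H,K)$, $N_G(H,K)=\{g\in G:g^{-1}Hg\le K\}$, composition induced by multiplication. For a finite group $X$, $\mathcal S^*_X$ is the poset of nonidentity $p$-subgroups of $X$ under inclusion. $\chi$ is Leinster's Euler characteristic: for a finite category $\mathcal C$, a weighting is $k^\bullet$ with $\sum_b|\mathcal C(a,b)|k^b=1$ for all $a$, a coweighting is $k_\bullet$ with $\sum_ak_a|\mathcal C(a,b)|=1$ for all $b$, and if both exist $\chi(\mathcal C)=\sum_bk^b=\sum_ak_a$ (for a finite poset, the sum of all values of the Möbius function; $0$ if empty). *)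

From HB Require Import structures.
From mathcomp Require Import all_boot all_order all_algebra all_fingroup all_solvable.
From Stdlib Require Import ClassicalEpsilon.
Set Implicit Arguments. Unset Strict Implicit. Unset Printing Implicit Defensive.
Import GRing.Theory.
Local Open Scope ring_scope.

(* A finite category is presented by its (finite) set of objects O inside a
   finType T and the cardinalities h a b = |C(a,b)| of its hom-sets. *)

Definition is_weighting (T : finType) (O : {set T}) (h : T -> T -> nat)
  (k : T -> rat) : Prop :=
  forall a, a \in O -> \sum_(b in O) (h a b)%:R * k b = 1.

Definition is_coweighting (T : finType) (O : {set T}) (h : T -> T -> nat)
  (k : T -> rat) : Prop :=
  forall b, b \in O -> \sum_(a in O) k a * (h a b)%:R = 1.

Definition has_euler_char (T : finType) (O : {set T}) (h : T -> T -> nat) : Prop :=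
  (exists k, is_weighting O h k) /\ (exists k, is_coweighting O h k).

(* c is the Euler characteristic: chi exists and every weighting sums to c
   (equivalently every coweighting does). *)
Definition euler_char_is (T : finType) (O : {set T}) (h : T -> T -> nat)
  (c : rat) : Prop :=
  has_euler_char O h /\ forall k, is_weighting O h k -> \sum_(b in O) k b = c.

Definition euler_char (T : finType) (O : {set T}) (h : T -> T -> nat) : rat :=
  epsilon (inhabits 0) (fun c => euler_char_is O h c).

Local Open Scope group_scope.

Definition nontriv_psubgroups (gT : finGroupType) (p : nat) (X : {set gT})
  : {set {set gT}} :=
  [set H : {set gT} | [&& group_set H, H \subset X, p.-group H & H != 1]].

(* hom counts of the poset S*_X (inclusion) *)
Definition incl_hom (gT : finGroupType) (H K : {set gT}) : nat := H \subset K.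

Definition transp (gT : finGroupType) (G H K : {set gT}) : {set gT} :=
  [set g in G | H :^ g \subset K].

(* |F*_G(H,K)| = |C_G(H) \ N_G(H,K)| (orbits C_G(H) g of left multiplication) *)
Definition frob_hom (gT : finGroupType) (G : {set gT}) (H K : {set gT}) : nat :=
  #|rcosets 'C_G(H) (transp G H K)|.

From mathcomp Require Import all_boot all_order all_algebra all_fingroup all_solvable.
From Stdlib Require Import ClassicalEpsilon.
From mathcomp Require Import ring.
Import GRing.Theory Num.Theory.

(* Fix a coweighting c of the poset S*_G (finite posets have weightings and
   coweightings because their incidence matrices are unitriangular).  Since
   N_G(H,K) is a union of right cosets of C_G(H),
   |F*_G(H,K)| = |C_G(H)|^-1 #{g in G | H^g <= K}; averaging over the
   conjugates of H turns c into the coweighting H |-> |C_G(H)| c(H) / |G| of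
   F*_G, and a weighting is built in the same way, so
   chi(F*_G) = |G|^-1 sum_H |C_G(H)| c(H).  On the other side, S*_{C_G(x)} is
   the down-closed subposet of the H centralized by x, on which c restricts to
   a coweighting; hence sum_x chi(S*_{C_G(x)}) counts each c(H) exactly
   |C_G(H)| times. *)

Set Implicit Arguments.
Unset Strict Implicit.
Unset Printing Implicit Defensive.

Local Open Scope ring_scope.

Section EulerCharacteristic.
Variables (T : finType) (O : {set T}) (h : T -> T -> nat).

Lemma euler_char_is_sum_coweighting (k k' : T -> rat) :
  is_weighting O h k -> is_coweighting O h k' ->
  euler_char_is O h (\sum_(a in O) k' a).
Proof.
move=> wk wk'; split; first by split; [exists k | exists k'].
move=> w ww; transitivity (\sum_(b in O) \sum_(a in O) k' a * (h a b)%:R * w b).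
  by apply: eq_bigr => b bO; rewrite -mulr_suml wk' ?mul1r.
rewrite exchange_big /=; apply: eq_bigr => a aO.
by under eq_bigr do rewrite -mulrA; rewrite -mulr_sumr ww ?mulr1.
Qed.

Lemma euler_charE (k k' : T -> rat) :
  is_weighting O h k -> is_coweighting O h k' ->
  euler_char O h = \sum_(a in O) k' a.
Proof.
move=> wk wk'; have chi_k' := euler_char_is_sum_coweighting wk wk'.
have [_ sum_k] := epsilon_spec (inhabits 0) (euler_char_is O h) (ex_intro _ _ chi_k').
by rewrite /euler_char -(sum_k k wk); case: chi_k' => _ ->.
Qed.

Lemma is_coweighting_sub (O' : {set T}) (k : T -> rat) :
  O' \subset O -> (forall a b, a \in O -> b \in O' -> h a b != 0%N -> a \in O') ->
  is_coweighting O h k -> is_coweighting O' h k.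
Proof.
move=> sO'O closedO' wk b bO'; rewrite -[RHS](wk b (subsetP sO'O b bO')).
rewrite [RHS](big_setID O') /= (setIidPr sO'O) [X in _ + X]big1 ?addr0 //.
move=> a /setDP[aO aO'].
case: (h a b =P 0%N) => [-> | /eqP hab]; first by rewrite mulr0.
by rewrite (closedO' a b aO bO' hab) in aO'.
Qed.

End EulerCharacteristic.

Lemma triangular_system_solvable (T : finType) (R : pzRingType) (r : rel T)
    (rank : T -> nat) (g : T -> R) :
  reflexive r -> (forall a b, r a b -> a != b -> (rank a < rank b)%N) ->
  forall O : {set T}, exists k : T -> R,
    forall a, a \in O -> \sum_(b in O) (r a b)%:R * k b = g a.
Proof.
move=> r_refl r_rank O; elim: {O}_.+1 {-2}O (ltnSn #|O|) => // n IH O leO.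
have [-> | [m0 m0O]] := set_0Vmem O; first by exists (fun _ => 0) => a; rewrite inE.
have [m mO min_m] := arg_minnP rank m0O; have {}mO : m \in O := mO.
have /IH [k sol_k] : (#|O :\ m| < n)%N by move: leO; rewrite (cardsD1 m O) mO.
pose km := g m - \sum_(c in O :\ m) (r m c)%:R * k c.
exists (fun b => if b == m then km else k b) => a aO.
(* a rank-minimal m only occurs in its own row, where it has coefficient 1 *)
rewrite (bigD1 m) //= eqxx.
have -> : \sum_(b in O | b != m) (r a b)%:R * (if b == m then km else k b)
        = \sum_(b in O :\ m) (r a b)%:R * k b.
  by apply: eq_big => [b | b /andP[_ /negbTE ->]]; rewrite // !inE andbC.
have [-> | a_neq_m] := eqVneq a m; first by rewrite r_refl mul1r subrK.
have -> : r a m = false.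
  by apply/negP => ram; have := r_rank _ _ ram a_neq_m; rewrite ltnNge min_m.
by rewrite mul0r add0r sol_k // !inE a_neq_m.
Qed.

Lemma subset_system_solvable (T : finType) (R : pzRingType) (O : {set {set T}})
    (g : {set T} -> R) :
  exists k, forall A, A \in O -> \sum_(B in O) (A \subset B)%:R * k B = g A.
Proof.
apply: (triangular_system_solvable (r := fun A B : {set T} => A \subset B)
                                   (rank := fun A => #|A|)) => [A | A B sAB neqAB].
  exact: subxx.
by apply: proper_card; rewrite properEneq neqAB.
Qed.

Lemma coweighting_subset_exists (T : finType) (O : {set {set T}}) :
  exists c, is_coweighting O (fun A B => A \subset B : nat) c.
Proof.
have [c sol_c] : exists c : {set T} -> rat,
    forall A, A \in O -> \sum_(B in O) (B \subset A)%:R * c B = 1.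
  apply: (triangular_system_solvable (r := fun A B : {set T} => B \subset A)
                                   (rank := fun A => #|~: A|)) => [A | A B sBA neqAB].
    exact: subxx.
  by apply: proper_card; rewrite properEneq setCS sBA andbT (inj_eq (@setC_inj T)).
by exists c => A AO; rewrite -[RHS](sol_c A AO); apply: eq_bigr => B _; rewrite mulrC.
Qed.

Local Open Scope group_scope.

Section FrobeniusCategory.
Variables (gT : finGroupType) (G : {group gT}).

Lemma card_transp (H K : {set gT}) :
  #|transp G H K| = (\sum_(g in G) (H :^ g \subset K))%N.
Proof.
rewrite -sum1_card big_mkcond [RHS]big_mkcond; apply: eq_bigr => g _.
by rewrite inE; case: (g \in G); case: (H :^ g \subset K).
Qed.

Lemma transp_mulcent (H K : {set gT}) c t :
  c \in 'C_G(H) -> t \in transp G H K -> c * t \in transp G H K.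
Proof.
case/setIP=> cG /(subsetP (cent_sub H)) /normP cN; rewrite !inE => /andP[tG sHtK].
by rewrite groupM //= conjsgM cN.
Qed.

Lemma card_transp_frob (H K : {set gT}) :
  #|transp G H K| = (frob_hom G H K * #|'C_G(H)|)%N.
Proof.
rewrite /frob_hom -sum_nat_const -sum1_card.
rewrite (partition_big (fun t => 'C_G(H) :* t) (mem (rcosets 'C_G(H) (transp G H K))));
  last by move=> t tT; apply/rcosetsP; exists t.
apply: eq_bigr => _ /rcosetsP[y yT ->]; rewrite -(card_rcoset _ y) -sum1_card.
apply: eq_bigl => t; rewrite (sameP eqP rcoset_eqP) andb_idl //.
by case/rcosetP=> c cC ->; apply: transp_mulcent.
Qed.

Lemma card_centJ (H : {set gT}) g : g \in G -> #|'C_G(H :^ g)| = #|'C_G(H)|.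
Proof. by move=> gG; rewrite centJ -{1}(conjGid gG) -conjIg cardJg. Qed.

Lemma natr_card_neq0 (K : {group gT}) : (#|K|%:R : rat) != 0%R.
Proof. by rewrite pnatr_eq0 -lt0n cardG_gt0. Qed.

Lemma frob_homE (H K : {set gT}) :
  (frob_hom G H K)%:R =
    ((\sum_(g in G) (H :^ g \subset K)%:R) / #|'C_G(H)|%:R)%R :> rat.
Proof.
by rewrite -natr_sum -card_transp card_transp_frob natrM mulfK ?natr_card_neq0.
Qed.

Variable O : {set {set gT}}.
Hypothesis O_conj : forall H g, H \in O -> g \in G -> H :^ g \in O.

Lemma frob_weighting (k : {set gT} -> rat) :
  (forall H, H \in O ->
     (\sum_(K in O) (H \subset K)%:R * k K = #|'C_G(H)|%:R / #|G|%:R)%R) ->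
  is_weighting O (frob_hom G) k.
Proof.
move=> k_sol H HO.
transitivity ((#|'C_G(H)|%:R)^-1 *
                \sum_(g in G) \sum_(K in O) (H :^ g \subset K)%:R * k K)%R.
  rewrite exchange_big mulr_sumr; apply: eq_bigr => K _.
  by rewrite frob_homE mulrAC mulrC mulr_suml.
under eq_bigr => g gG do rewrite k_sol ?O_conj // card_centJ //.
by rewrite sumr_const; field; rewrite !natr_card_neq0.
Qed.

Lemma frob_coweighting (c : {set gT} -> rat) :
  is_coweighting O (@incl_hom gT) c ->
  is_coweighting O (frob_hom G) (fun H => #|'C_G(H)|%:R / #|G|%:R * c H)%R.
Proof.
move=> c_cow K KO.
transitivity ((#|G|%:R)^-1 *
                \sum_(g in G) \sum_(H in O) c H * (incl_hom H (K :^ g^-1))%:R)%R.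
  rewrite exchange_big mulr_sumr; apply: eq_bigr => H _.
  under eq_bigr do rewrite /incl_hom -sub_conjg.
  by rewrite frob_homE -!mulr_sumr; field; rewrite !natr_card_neq0.
under eq_bigr => g gG do rewrite c_cow ?O_conj ?groupV //.
by rewrite sumr_const; field; rewrite natr_card_neq0.
Qed.

End FrobeniusCategory.

Section NontrivialPSubgroups.
Variables (gT : finGroupType) (G : {group gT}) (p : nat).

Lemma nontriv_psubgroupsJ H g :
  H \in nontriv_psubgroups p G -> g \in G -> H :^ g \in nontriv_psubgroups p G.
Proof.
move=> + gG; rewrite !inE group_setJ conjsg_eq1 /pgroup cardJg sub_conjg.
by rewrite (conjGid (groupVr gG)).
Qed.

Lemma nontriv_psubgroups_cent1 x H :
  (H \in nontriv_psubgroups p 'C_G[x]) =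
  (H \in nontriv_psubgroups p G) && (x \in 'C(H)).
Proof.
rewrite !inE subsetI sub_cent1.
by case: (group_set H); case: (H \subset G); case: (x \in 'C(H));
   rewrite /= ?andbT ?andbF.
Qed.

Lemma euler_char_cent1 x (c : {set gT} -> rat) :
  is_coweighting (nontriv_psubgroups p G) (@incl_hom gT) c ->
  euler_char (nontriv_psubgroups p 'C_G[x]) (@incl_hom gT) =
    (\sum_(H in nontriv_psubgroups p G | x \in 'C(H)) c H)%R.
Proof.
move=> c_cow.
have [k k_w] :=
  subset_system_solvable (nontriv_psubgroups p 'C_G[x]) (fun=> 1%R : rat).
have c_cow_x : is_coweighting (nontriv_psubgroups p 'C_G[x]) (@incl_hom gT) c.
  apply: is_coweighting_sub c_cow => [|H K HO].
    by apply/subsetP => H; rewrite nontriv_psubgroups_cent1 => /andP[].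
  rewrite !nontriv_psubgroups_cent1 HO /incl_hom => /andP[_ xCK].
  by case: (boolP (H \subset K)) => // sHK _; apply: subsetP (centS sHK) x xCK.
rewrite (euler_charE (h := @incl_hom gT) k_w c_cow_x).
by apply: eq_bigl => H; rewrite nontriv_psubgroups_cent1.
Qed.

End NontrivialPSubgroups.

Theorem proposition5p3 (gT : finGroupType) (G : {group gT}) (p : nat) :
  prime p ->
  has_euler_char (nontriv_psubgroups p G) (frob_hom G) /\
  euler_char (nontriv_psubgroups p G) (frob_hom G) =
    ((#|G|%:R)^-1 * \sum_(x in G)
        euler_char (nontriv_psubgroups p 'C_G[x]%g) (@incl_hom gT))%R.
Proof.
(* the argument works for any integer p *)
move=> _.
have O_conj := @nontriv_psubgroupsJ gT G p.
have [c c_cow] := coweighting_subset_exists (nontriv_psubgroups p G).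
have [k k_sol] := subset_system_solvable (nontriv_psubgroups p G)
                    (fun H => #|'C_G(H)|%:R / #|G|%:R : rat)%R.
have k_w := frob_weighting O_conj k_sol.
have c_w := frob_coweighting O_conj c_cow.
split; first by split; [exists k | eexists; exact: c_w].
rewrite (euler_charE k_w c_w).
rewrite [in RHS](eq_bigr _ (fun x _ => euler_char_cent1 x c_cow)).
rewrite (exchange_big_dep (mem (nontriv_psubgroups p G))) => [|x H _ /andP[]//].
rewrite mulr_sumr; apply: eq_bigr => H HO.
rewrite (eq_bigl (fun x => x \in 'C_G(H))) => [|x]; last by rewrite HO inE.
by rewrite sumr_const; ring.
Qed.
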